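(* Let $S,T$ be sets of vectors in $\mathbb{R}^d$ with $|S|=|T|=r$, $|S\triangle T|\leq 2d$, and $V_SV_S^\top$ invertible, and let $X=T\setminus S$, $Y=S\setminus T$. Then \[\det(V_TV_T^\top)\geq\det(V_SV_S^\top)\cdot\det\big(V_X^\top(V_SV_S^\top)^{-1}V_Y\big)^2.\]
   Context: For a set $Z$ of vectors in $\mathbb{R}^d$, $V_Z$ denotes the $d\times|Z|$ matrix whose columns are the vectors of $Z$. *)

From HB Require Import structures.
From mathcomp Require Import all_boot all_order all_algebra.
From mathcomp Require Import finmap.
From mathcomp Require Import reals.
Set Implicit Arguments. Unset Strict Implicit. Unset Printing Implicit Defensive.
Import Order.TTheory GRing.Theory Num.Theory.
Local Open Scope ring_scope.
Local Open Scope fset_scope.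

(* V_Z : the d x |Z| matrix whose columns are the vectors of the finite set Z
   (in the enumeration order of Z; the statement is insensitive to this order). *)
Definition Vmat (R : realType) (d : nat) (Z : {fset 'cV[R]_d}) : 'M[R]_(d, #|` Z|) :=
  \matrix_(i < d, j < #|` Z|) (nth 0 (enum_fset Z) j) i 0.

(* determinant of a matrix whose dimensions are (propositionally) equal;
   it is 0 when the matrix is not square. *)
Definition sqdet (R : realType) (m n : nat) (A : 'M[R]_(m, n)) : R :=
  match m =P n with
  | ReflectT e => \det (castmx (erefl m, esym e) A)
  | ReflectF _ => 0
  end.

(* Let C be the Gram matrix of S ∩ T, X = V_(T∖S) and Y = V_(S∖T), so that A := V_S V_S^T = C + Y Y^T
   and B := V_T V_T^T = A - Y Y^T + X X^T.  Sylvester's identity det(1 + UV) = det(1 + VU) turns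
   det B / det A into the determinant of the 2k x 2k block matrix
     [ 1 + P    Q    ]      P = X^T A^-1 X,  Q = X^T A^-1 Y,
     [ -Q^T   1 - R' ]      R' = Y^T A^-1 Y,
   whose Schur complement is (1 - R') + Q^T (1 + P)^-1 Q.  Both 1 + P and 1 - R' are positive
   semidefinite, and adding a positive semidefinite matrix does not decrease the determinant, so
   det B / det A >= det (1 + P) * det (Q^T (1 + P)^-1 Q) = det Q ^ 2. *)

From HB Require Import structures.
From mathcomp Require Import all_boot all_order all_algebra.
From mathcomp Require Import finmap.
From mathcomp Require Import reals.
Import Order.TTheory GRing.Theory Num.Theory.
Set Implicit Arguments. Unset Strict Implicit. Unset Printing Implicit Defensive.
Local Open Scope ring_scope.

Lemma det_1_mulmxC (R : comPzRingType) m n (U : 'M[R]_(m, n)) (V : 'M[R]_(n, m)) :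
  \det (1%:M + U *m V) = \det (1%:M + V *m U).
Proof.
have lower : block_mx 1%:M (- U) V 1%:M =
    block_mx 1%:M 0 V 1%:M *m block_mx 1%:M (- U) 0 (1%:M + V *m U).
  rewrite mulmx_block ?mul1mx ?mul0mx ?mulmx1 ?mulmx0 ?addr0 ?add0r mulmxN.
  by rewrite [- _ + _]addrC addrK.
have upper : block_mx 1%:M (- U) V 1%:M =
    block_mx (1%:M + U *m V) (- U) 0 1%:M *m block_mx 1%:M 0 V 1%:M.
  by rewrite mulmx_block ?mulmx1 ?mulmx0 ?mul0mx ?mul1mx ?addr0 ?add0r mulNmx addrK.
have := congr1 determinant (etrans (esym upper) lower).
by rewrite !det_mulmx !det_lblock !det_ublock !det1 !mul1r !mulr1.
Qed.

Lemma det_block_schur (R : comUnitRingType) n1 n2 (Aul : 'M[R]_n1) (Aur : 'M_(n1, n2))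
    (Adl : 'M_(n2, n1)) (Adr : 'M_n2) :
  Aul \in unitmx ->
  \det (block_mx Aul Aur Adl Adr) = \det Aul * \det (Adr - Adl *m invmx Aul *m Aur).
Proof.
move=> Aul_unit.
have -> : block_mx Aul Aur Adl Adr = block_mx 1%:M 0 (Adl *m invmx Aul) 1%:M *m
    block_mx Aul Aur 0 (Adr - Adl *m invmx Aul *m Aur).
  rewrite mulmx_block ?mul1mx ?mul0mx ?mulmx0 ?addr0 ?add0r -mulmxA mulVmx // mulmx1.
  by rewrite addrCA subrr addr0.
by rewrite det_mulmx det_lblock det_ublock !det1 !mul1r.
Qed.

Lemma det_add_rank1 (R : comUnitRingType) d (G : 'M[R]_d) (v : 'cV[R]_d) :
  G \in unitmx -> \det (G + v *m v^T) = \det G * (1 + (v^T *m invmx G *m v) 0 0).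
Proof.
move=> G_unit.
have -> : G + v *m v^T = G *m (1%:M + invmx G *m v *m v^T).
  by rewrite mulmxDr mulmx1 !mulmxA mulmxV // mul1mx.
by rewrite det_mulmx det_1_mulmxC det_mx11 mulmxA !mxE eqxx.
Qed.

Lemma det_sub_add_outer (R : comUnitRingType) d k (A : 'M[R]_d) (X Y : 'M[R]_(d, k)) :
  A \in unitmx ->
  \det (A - Y *m Y^T + X *m X^T) = \det A *
    \det (block_mx (1%:M + X^T *m invmx A *m X) (X^T *m invmx A *m Y)
                   (- (Y^T *m invmx A *m X)) (1%:M - Y^T *m invmx A *m Y)).
Proof.
move=> A_unit.
have -> : A - Y *m Y^T + X *m X^T =
    A *m (1%:M + invmx A *m row_mx X Y *m col_mx X^T (- Y^T)).
  rewrite mulmxDr mulmx1 !mulmxA mulmxV // mul1mx mul_row_col mulmxN.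
  by rewrite addrA addrAC.
rewrite det_mulmx det_1_mulmxC mul_mx_row mul_col_row (scalar_mx_block k k).
by rewrite add_block_mx !mulNmx !mulmxA !add0r.
Qed.

Section Gram.
Variable R : rcfType.

Definition gram d (s : seq 'cV[R]_d) : 'M[R]_d := \sum_(v <- s) v *m v^T.

(* Over a real closed field these are exactly the positive semidefinite matrices; the
   determinant facts below are proved by induction on the sequence of vectors. *)
Definition psd d (G : 'M[R]_d) := exists s, G = gram s.

Lemma gram_cat d (s t : seq 'cV[R]_d) : gram (s ++ t) = gram s + gram t.
Proof. exact: big_cat. Qed.

Lemma psd_gram d (s : seq 'cV[R]_d) : psd (gram s).
Proof. by exists s. Qed.

Lemma psdD d (G H : 'M[R]_d) : psd G -> psd H -> psd (G + H).
Proof. by move=> [s ->] [t ->]; exists (s ++ t); rewrite gram_cat. Qed.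

Lemma psd_sym d (G : 'M[R]_d) : psd G -> G^T = G.
Proof.
move=> [s ->]; apply/matrixP => i j; rewrite mxE !summxE; apply: eq_bigr => v _.
by rewrite !mxE !big_ord1 !mxE mulrC.
Qed.

Lemma psd_congr d m (N : 'M[R]_(m, d)) (G : 'M[R]_d) : psd G -> psd (N *m G *m N^T).
Proof.
move=> [s ->]; exists (map (mulmx N) s).
rewrite /gram big_map mulmx_sumr mulmx_suml; apply: eq_bigr => v _.
by rewrite trmx_mul !mulmxA.
Qed.

Lemma psd_mulmx_tr d n (N : 'M[R]_(d, n)) : psd (N *m N^T).
Proof.
exists [seq col j N | j <- enum 'I_n]; rewrite /gram big_map big_enum /=.
apply/matrixP => i j; rewrite !mxE summxE; apply: eq_bigr => k _.
by rewrite !mxE big_ord1 !mxE.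
Qed.

Lemma psd_scalar d (x : R) : 0 <= x -> psd (x%:M : 'M[R]_d).
Proof.
move=> x_ge0; have := psd_mulmx_tr ((Num.sqrt x)%:M : 'M[R]_d).
by rewrite tr_scalar_mx -scalar_mxM -expr2 sqr_sqrtr.
Qed.

Lemma psd1 d : psd (1%:M : 'M[R]_d).
Proof. exact/psd_scalar/ler01. Qed.

Lemma psd_inv d (G : 'M[R]_d) : psd G -> psd (invmx G).
Proof.
move=> psdG; have [G_unit|G_singular] := boolP (G \in unitmx); last first.
  by rewrite invmx_out.
have -> : invmx G = invmx G *m G *m (invmx G)^T.
  by rewrite trmx_inv psd_sym // mulVmx // mul1mx.
exact: psd_congr.
Qed.

Lemma psd_quad_ge0 d (G : 'M[R]_d) (w : 'cV[R]_d) : psd G -> 0 <= (w^T *m G *m w) 0 0.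
Proof.
move=> [s ->]; rewrite mulmx_sumr mulmx_suml summxE; apply: sumr_ge0 => v _.
rewrite !mulmxA -(mulmxA _ v^T) -[v^T *m w]trmxK trmx_mul trmxK mxE big_ord1.
by rewrite [_^T 0 0]mxE -expr2 sqr_ge0.
Qed.

Lemma det_scalar_add_gram_gt0 d (x : R) (s : seq 'cV[R]_d) :
  0 < x -> 0 < \det (x%:M + gram s).
Proof.
move=> x_gt0; elim: s => [|v s IHs]; first by rewrite /gram big_nil addr0 det_scalar exprn_gt0.
have G_psd : psd (x%:M + gram s) by apply/psdD/psd_gram/psd_scalar/ltW.
rewrite /gram big_cons addrCA addrC det_add_rank1 ?unitmxE ?unitfE ?gt_eqF //.
by rewrite mulr_gt0 // ltr_pwDl // psd_quad_ge0 //; exact: psd_inv.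
Qed.

Lemma psd_det_ge0 d (G : 'M[R]_d) : psd G -> 0 <= \det G.
Proof.
(* p x = det (x + G) is positive for x > 0, so p 0 < 0 would give a root of p in [0, 1]. *)
move=> [s ->]; pose p : {poly R} := \det ('X%:M + map_mx polyC (gram s)).
have pE x : p.[x] = \det (x%:M + gram s).
  rewrite -horner_evalE -det_map_mx; congr determinant; apply/matrixP => i j.
  by rewrite !mxE rmorphD rmorphMn /= !horner_evalE hornerX hornerC.
rewrite leNgt; apply/negP => det_lt0.
have p0 : p.[0] = \det (gram s) by rewrite pE raddf0 add0r.
have [x /andP[x_ge0 _]] : exists2 x, 0 <= x <= 1 & root p x.
  by apply: poly_ivt; rewrite ?ler01 // p0 ltW //= pE ltW // det_scalar_add_gram_gt0.
move: x_ge0; rewrite le_eqVlt /root => /predU1P[<-|x_gt0].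
- by rewrite p0 lt_eqF.
- by rewrite pE gt_eqF // det_scalar_add_gram_gt0.
Qed.

Lemma psd_det_le_addl d (G H : 'M[R]_d) : psd G -> psd H -> \det H <= \det (G + H).
Proof.
move=> [s ->] psdH; elim: s => [|v s IHs]; first by rewrite /gram big_nil add0r.
rewrite /gram big_cons -addrA addrC; set K := _ + H in IHs *.
have psdK : psd K by apply/psdD/psdH/psd_gram.
apply: le_trans IHs _; have [K_unit|K_singular] := boolP (K \in unitmx).
  rewrite det_add_rank1 // ler_peMr ?psd_det_ge0 // lerDl.
  exact/psd_quad_ge0/psd_inv.
move: K_singular; rewrite unitmxE unitfE negbK => /eqP ->.
exact/psd_det_ge0/psdD/psd_mulmx_tr.
Qed.

Lemma psd_1_sub_proj d k (C : 'M[R]_d) (Y : 'M[R]_(d, k)) :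
  psd C -> (C + Y *m Y^T) \in unitmx ->
  psd (1%:M - Y^T *m invmx (C + Y *m Y^T) *m Y).
Proof.
set A := C + Y *m Y^T => psdC A_unit.
have A_sym : A^T = A by apply/psd_sym/psdD/psd_mulmx_tr.
set M := Y^T *m invmx A; set P := M *m Y.
have MT : M^T = invmx A *m Y by rewrite trmx_mul trmx_inv A_sym trmxK.
have PT : P^T = P by rewrite trmx_mul MT mulmxA.
have MCM : M *m C *m M^T = P - P *m P.
  have -> : C = A - Y *m Y^T by rewrite addrK.
  have MA : M *m A = Y^T by rewrite -mulmxA mulVmx // mulmx1.
  by rewrite mulmxBr mulmxBl MA MT /P /M !mulmxA.
have -> : 1%:M - P = M *m C *m M^T + (1%:M - P) *m (1%:M - P)^T.
  rewrite MCM linearB /= trmx1 PT mulmxBl mul1mx mulmxBr mulmx1.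
  by rewrite [RHS]addrC subrK.
by apply: psdD; [exact: psd_congr | exact: psd_mulmx_tr].
Qed.

Lemma det_exchange_le d k (C : 'M[R]_d) (X Y : 'M[R]_(d, k)) :
  psd C -> (C + Y *m Y^T) \in unitmx ->
  \det (C + Y *m Y^T) * \det (X^T *m invmx (C + Y *m Y^T) *m Y) ^+ 2
    <= \det (C + X *m X^T).
Proof.
set A := C + Y *m Y^T => psdC A_unit.
have A_psd : psd A by apply/psdD/psd_mulmx_tr.
set P := X^T *m invmx A *m X; set Q := X^T *m invmx A *m Y.
have QT : Q^T = Y^T *m invmx A *m X.
  by rewrite !trmx_mul trmxK trmx_inv psd_sym // mulmxA.
have P_psd : psd P by rewrite /P -{2}[X]trmxK; exact/psd_congr/psd_inv.
have P1_gt0 : 0 < \det (1%:M + P).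
  by have := psd_det_le_addl P_psd (psd1 k); rewrite det1 addrC; apply: lt_le_trans.
have -> : C + X *m X^T = A - Y *m Y^T + X *m X^T by rewrite addrK.
rewrite det_sub_add_outer // -/P -/Q -QT det_block_schur ?unitmxE ?unitfE ?gt_eqF //.
rewrite !mulNmx opprK; set W := invmx (1%:M + P).
have H_psd : psd (Q^T *m W *m Q).
  by rewrite -{2}[Q]trmxK; apply/psd_congr/psd_inv/psdD/P_psd/psd1.
have detH : \det (Q^T *m W *m Q) * \det (1%:M + P) = \det Q ^+ 2.
  by rewrite !det_mulmx det_tr det_inv mulrAC divfK ?gt_eqF // expr2.
apply: ler_wpM2l; first exact: psd_det_ge0.
rewrite -detH mulrC; apply: ler_wpM2l; first exact: ltW.
exact: psd_det_le_addl (psd_1_sub_proj psdC A_unit) H_psd.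
Qed.

Lemma gram_fsetID d (A B : {fset 'cV[R]_d}) :
  gram (enum_fset A) = gram (enum_fset (A `&` B)%fset) + gram (enum_fset (A `\` B)%fset).
Proof.
rewrite -gram_cat; apply: perm_big; apply: uniq_perm.
- exact: fset_uniq.
- rewrite cat_uniq !fset_uniq /= andbT; apply/hasPn => x.
  by rewrite in_fsetD in_fsetI => /andP[/negbTE -> _]; rewrite andbF.
- by move=> x; rewrite mem_cat in_fsetI in_fsetD; case: (x \in B); case: (x \in A).
Qed.

End Gram.

Local Open Scope fset_scope.

Lemma cardfsD_sym (K : choiceType) (A B : {fset K}) :
  #|` A| = #|` B| -> #|` A `\` B| = #|` B `\` A|.
Proof.
move=> cardAB; apply/eqP; rewrite -(eqn_add2l #|` A `&` B|) cardfsID fsetIC cardfsID.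
by rewrite cardAB.
Qed.

Lemma sqdet_det (R : realType) m (M : 'M[R]_m) : sqdet M = \det M.
Proof.
rewrite /sqdet; case: eqP => // e.
by rewrite (eq_irrelevance e (erefl m)) castmx_id.
Qed.

Lemma Vmat_mulmx_tr (R : realType) d (Z : {fset 'cV[R]_d}) :
  Vmat Z *m (Vmat Z)^T = gram (enum_fset Z).
Proof.
apply/matrixP => i j; rewrite !mxE summxE (big_nth 0) big_mkord.
by apply: eq_bigr => l _; rewrite !mxE big_ord1 !mxE.
Qed.

Theorem mainTheorem7 (R : realType) (d r : nat) (S T : {fset 'cV[R]_d}) :
  #|` S| = r -> #|` T| = r ->
  (#|` (S `\` T) `|` (T `\` S)| <= 2 * d)%N ->
  (Vmat S *m (Vmat S)^T) \in unitmx ->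
  \det (Vmat S *m (Vmat S)^T) *
    sqdet ((Vmat (T `\` S))^T *m invmx (Vmat S *m (Vmat S)^T) *m Vmat (S `\` T)) ^+ 2
  <= \det (Vmat T *m (Vmat T)^T).
Proof.
move=> cardS cardT _.
have cardD : #|` S `\` T| = #|` T `\` S| by apply: cardfsD_sym; rewrite cardS cardT.
rewrite !Vmat_mulmx_tr (gram_fsetID S T) (gram_fsetID T S) fsetIC -!Vmat_mulmx_tr.
move: (Vmat (S `\` T)) (Vmat (T `\` S)); rewrite cardD => Y X.
by rewrite sqdet_det; apply: det_exchange_le; exact: psd_mulmx_tr.
Qed.
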